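(* Let $(\mathfrak{g},\langle\cdot,\cdot\rangle)$ be a pseudo-Euclidean unimodular Lie algebra admitting a derivation with nonzero trace. Then $(\mathfrak{g},\langle\cdot,\cdot\rangle)$ is Einstein if and only if it is Ricci-flat.
   Context: A pseudo-Euclidean Lie algebra is a finite-dimensional real Lie algebra $\mathfrak{g}$ with a nondegenerate symmetric bilinear form $\langle\cdot,\cdot\rangle$ (equivalently, a left-invariant pseudo-Riemannian metric on a corresponding Lie group). Unimodular means $\mathrm{tr}(\mathrm{ad}_u)=0$ for all $u\in\mathfrak{g}$. The Levi-Civita product $\mathrm{L}$ is defined by $2\langle \mathrm{L}_uv,w\rangle=\langle[u,v],w\rangle+\langle[w,u],v\rangle+\langle[w,v],u\rangle$; the curvature is $K(u,v)=\mathrm{L}_{[u,v]}-[\mathrm{L}_u,\mathrm{L}_v]$; the Ricci curvature is $\mathrm{ric}(u,v)=\mathrm{tr}(w\mapsto K(u,w)v)$ and the Ricci operator $\mathrm{Ric}$ is defined by $\langle\mathrm{Ric}(u),v\rangle=\mathrm{ric}(u,v)$. The algebra is Einstein if $\mathrm{Ric}=\lambda\,\mathrm{Id}_{\mathfrak{g}}$ for some $\lambda\in\mathbb{R}$, and Ricci-flat if $\mathrm{Ric}=0$. *)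

(* A finite-dimensional real Lie algebra is modelled as
   R^n (row vectors 'rV[R]_n, R : realType) with a bracket satisfying the
   Lie algebra axioms; the pseudo-Euclidean metric is <u,v> = u B v^T with
   B symmetric and invertible (nondegenerate). *)
From HB Require Import structures.
From mathcomp Require Import all_boot all_order all_algebra.
From mathcomp Require Import reals.
Set Implicit Arguments. Unset Strict Implicit. Unset Printing Implicit Defensive.
Import Order.TTheory GRing.Theory Num.Theory.
Local Open Scope ring_scope.

Section LieDefs.
Variables (R : realType) (n : nat).
Notation V := 'rV[R]_n.

(* Lie bracket axioms: bilinear (left linearity + antisymmetry), Jacobi. *)
Definition is_lie_bracket (br : V -> V -> V) : Prop :=
  [/\ forall (a : R) (u v w : V), br (a *: u + v) w = a *: br u w + br v w,
      forall u v : V, br u v = - br v u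
    & forall u v w : V, br u (br v w) + br v (br w u) + br w (br u v) = 0].

Definition is_pseudo_metric (B : 'M[R]_n) : Prop :=
  B^T = B /\ B \in unitmx.

Definition ip (B : 'M[R]_n) (u v : V) : R := (u *m B *m v^T) 0 0.

Definition ev (j : 'I_n) : V := delta_mx 0 j.

Definition ad (br : V -> V -> V) (u : V) : 'M[R]_n := lin1_mx (br u).

Definition unimodular (br : V -> V -> V) : Prop :=
  forall u : V, \tr (ad br u) = 0.

Definition is_derivation (br : V -> V -> V) (D : 'M[R]_n) : Prop :=
  forall u v : V, br u v *m D = br (u *m D) v + br u (v *m D).

(* Levi-Civita product: the unique L_u v with
   2 <L_u v, w> = <[u,v],w> + <[w,u],v> + <[w,v],u> for all w. *)
Definition LC (B : 'M[R]_n) (br : V -> V -> V) (u v : V) : V :=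
  (2%:R)^-1 *: ((\row_j (ip B (br u v) (ev j) + ip B (br (ev j) u) v
                        + ip B (br (ev j) v) u)) *m invmx B).

Definition curv (B : 'M[R]_n) (br : V -> V -> V) (u v w : V) : V :=
  LC B br (br u v) w - (LC B br u (LC B br v w) - LC B br v (LC B br u w)).

Definition ric (B : 'M[R]_n) (br : V -> V -> V) (u v : V) : R :=
  \tr (lin1_mx (fun w => curv B br u w v)).

(* Ricci operator: <Ric u, v> = ric(u,v) *)
Definition Ric (B : 'M[R]_n) (br : V -> V -> V) (u : V) : V :=
  (\row_j ric B br u (ev j)) *m invmx B.

Definition einstein (B : 'M[R]_n) (br : V -> V -> V) : Prop :=
  exists lambda : R, forall u : V, Ric B br u = lambda *: u.

Definition ricci_flat (B : 'M[R]_n) (br : V -> V -> V) : Prop :=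
  forall u : V, Ric B br u = 0.

End LieDefs.

From HB Require Import structures.
From mathcomp Require Import all_boot all_order all_algebra.
From mathcomp Require Import reals.
From mathcomp Require Import lra.
Set Implicit Arguments. Unset Strict Implicit. Unset Printing Implicit Defensive.
Import Order.TTheory GRing.Theory Num.Theory.
Local Open Scope ring_scope.

(* Let L_u v = R_v u = LC u v be the Levi-Civita multiplications. The Koszul
   formula gives R_x = -(S_x + T_x)/2 with S_x = ad_x + ad_x^* self-adjoint and
   T_x : w |-> ad_w^* x skew-adjoint, and torsion-freeness ad_u - L_u = -R_u.
   Unimodularity makes every R_x traceless, whence
     ric(u,v) = -tr(R_u R_v) = -(2 tr(ad_u ad_v) + 2 tr(ad_u ad_v^* ) + tr(T_u T_v))/4.
   For a derivation D we have ad_(Dx) = [ad_x, D]. Contracting against a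
   B-dual basis, tr(Ric o D) = sum_j ric(D e_j^*, e_j) splits into three sums:
   the Killing term gives 0, the second a and the third -b, where
   a = sum_j tr(D ad_(e_j^* ) ad_(e_j)^* ) and b = sum_j tr(ad_(e_j^* ) D ad_(e_j)^* );
   expanding the second term by the derivation rule instead gives a = b - a, i.e.
   b = 2a, so tr(Ric o D) = 0. If Ric = lambda Id this trace is lambda tr D,
   forcing lambda = 0. *)

Section RowLinear.
Variables (R : pzRingType) (m p : nat).

Lemma mul_rV_lin1_linear (f : 'rV[R]_m -> 'rV[R]_p) :
  linear f -> forall u, u *m lin1_mx f = f u.
Proof.
by move=> f_lin; apply: (mul_rV_lin1 (HB.pack f (GRing.isLinear.Build _ _ _ _ f f_lin))).
Qed.

Lemma lin1_mx_mulmxr (f : 'rV[R]_m -> 'rV[R]_p) (M : 'M[R]_(m, p)) :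
  (forall w, f w = w *m M) -> lin1_mx f = M.
Proof. by move=> fM; apply/matrixP => i j; rewrite mxE fM -rowE mxE. Qed.

End RowLinear.

Section PseudoEuclidean.
Variables (R : realType) (n : nat) (B : 'M[R]_n).
Hypotheses (B_sym : B^T = B) (B_unit : B \in unitmx).
Local Notation V := 'rV[R]_n.
Local Notation e := (ev R).

Lemma scalar_rowE (f : V -> R) : scalar f -> forall x, f x = \sum_j x 0 j * f (e j).
Proof.
move=> f_lin x; pose g : {scalar V} := HB.pack f (GRing.isLinear.Build _ _ _ _ f f_lin).
rewrite -[f x]/(g x) {1}(row_sum_delta x) linear_sum.
by apply: eq_bigr => j _; rewrite linearZ.
Qed.

Definition adjoint (M : 'M[R]_n) : 'M[R]_n := B *m M^T *m invmx B.

Definition dual (i : 'I_n) : V := e i *m invmx B.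

Lemma invmx_sym : (invmx B)^T = invmx B.
Proof. by rewrite trmx_inv B_sym. Qed.

Lemma adjointK : involutive adjoint.
Proof.
move=> M; rewrite /adjoint !trmx_mul trmxK invmx_sym B_sym !mulmxA mulmxV //.
by rewrite mul1mx -!mulmxA mulmxV ?mulmx1.
Qed.

Lemma adjointM M N : adjoint (M *m N) = adjoint N *m adjoint M.
Proof.
by rewrite /adjoint trmx_mul !mulmxA -[B *m N^T *m invmx B *m B]mulmxA mulVmx ?mulmx1.
Qed.

Lemma adjoint_is_linear : linear adjoint.
Proof.
by move=> a M N; rewrite /adjoint linearP /= mulmxDr mulmxDl -scalemxAr -scalemxAl.
Qed.

Lemma adjointD M N : adjoint (M + N) = adjoint M + adjoint N.
Proof. by have := adjoint_is_linear 1 M N; rewrite !scale1r. Qed.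

Lemma mxtrace_adjoint M : \tr (adjoint M) = \tr M.
Proof. by rewrite /adjoint mxtrace_mulC mulmxA mulVmx ?mul1mx ?mxtrace_tr. Qed.

Lemma mxtrace_skew M : adjoint M = - M -> \tr M = 0.
Proof. by move=> skewM; have := mxtrace_adjoint M; rewrite skewM linearN /=; lra. Qed.

Lemma mxtrace_sym_skew P Q : adjoint P = P -> adjoint Q = - Q -> \tr (P *m Q) = 0.
Proof.
move=> symP skewQ; have := mxtrace_adjoint (P *m Q).
by rewrite adjointM symP skewQ mulNmx linearN /= mxtrace_mulC; lra.
Qed.

Lemma mxtrace_mul_sym_add_skew P Q X Y :
    adjoint P = P -> adjoint Q = Q -> adjoint X = - X -> adjoint Y = - Y ->
  \tr ((P + X) *m (Q + Y)) = \tr (P *m Q) + \tr (X *m Y).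
Proof.
move=> symP symQ skewX skewY; rewrite mulmxDr !mulmxDl !mxtraceD.
rewrite (mxtrace_sym_skew symP skewY) (mxtrace_mulC X) (mxtrace_sym_skew symQ skewX).
by rewrite addr0 add0r.
Qed.

Lemma mxtrace_mul_add_adjoint P Q :
  \tr ((P + adjoint P) *m (Q + adjoint Q)) = 2 * (\tr (P *m Q) + \tr (P *m adjoint Q)).
Proof.
have sym_part : \tr (adjoint P *m adjoint Q) = \tr (P *m Q).
  by rewrite -adjointM mxtrace_adjoint mxtrace_mulC.
have cross_part : \tr (adjoint P *m Q) = \tr (P *m adjoint Q).
  by rewrite -mxtrace_adjoint adjointM adjointK mxtrace_mulC.
by rewrite mulmxDr !mulmxDl !mxtraceD sym_part cross_part; lra.
Qed.

Lemma ip_sym x y : ip B x y = ip B y x.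
Proof.
by rewrite /ip -[y *m _ *m _]trmxK [in RHS]mxE !trmx_mul trmxK B_sym mulmxA.
Qed.

Lemma ipNl x y : ip B (- x) y = - ip B x y.
Proof. by rewrite /ip !mulNmx mxE. Qed.

Lemma ipNr x y : ip B x (- y) = - ip B x y.
Proof. by rewrite ip_sym ipNl ip_sym. Qed.

Lemma ip_adjointr x y M : ip B (x *m M) y = ip B x (y *m adjoint M).
Proof.
rewrite /ip /adjoint !trmx_mul invmx_sym trmxK B_sym !mulmxA.
by rewrite -[x *m B *m invmx B]mulmxA mulmxV ?mulmx1.
Qed.

Lemma ip_adjointl x y M : ip B (x *m adjoint M) y = ip B x (y *m M).
Proof. by rewrite ip_adjointr adjointK. Qed.

Lemma ip_dual x i : ip B x (dual i) = x 0 i.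
Proof.
rewrite /ip /dual /ev trmx_mul invmx_sym mulmxA -[x *m B *m invmx B]mulmxA.
by rewrite mulmxV // mulmx1 trmx_delta -colE mxE.
Qed.

Lemma ip_ev x i : ip B x (e i) = (x *m B) 0 i.
Proof. by rewrite /ip /ev trmx_delta -colE mxE. Qed.

Lemma ev_mulmx m i (M : 'M[R]_(n, m)) j : (e i *m M) 0 j = M i j.
Proof. by rewrite /ev -rowE mxE. Qed.

Lemma ip_nondegenerate u v : (forall z, ip B z u = ip B z v) -> u = v.
Proof.
by move=> uv; apply/rowP => i; rewrite -(ip_dual u) -(ip_dual v) ip_sym uv ip_sym.
Qed.

Lemma mxtrace_dual M : \tr M = \sum_i ip B (e i *m M) (dual i).
Proof. by apply: eq_bigr => i _; rewrite ip_dual ev_mulmx. Qed.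

Lemma sum_ip_ev_dual P Q : \sum_i ip B (e i *m P) (dual i *m Q) = \tr (P *m adjoint Q).
Proof.
by rewrite mxtrace_dual; apply: eq_bigr => i _; rewrite ip_sym ip_adjointr ip_sym mulmxA.
Qed.

Lemma sum_ip_dual_ev P Q : \sum_i ip B (dual i *m P) (e i *m Q) = \tr (P *m adjoint Q).
Proof.
under eq_bigr do rewrite ip_sym.
by rewrite sum_ip_ev_dual -mxtrace_adjoint adjointM adjointK.
Qed.

Lemma sum_ev_dual_swap (phi : V -> V -> R) :
    (forall x, scalar (phi x)) -> (forall y, scalar (phi^~ y)) ->
  \sum_i phi (e i) (dual i) = \sum_i phi (dual i) (e i).
Proof.
move=> phi_linr phi_linl.
under eq_bigr do rewrite (scalar_rowE (phi_linr _)).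
under [RHS]eq_bigr do rewrite (scalar_rowE (phi_linl _)).
rewrite [RHS]exchange_big; apply: eq_bigr => i _; apply: eq_bigr => j _.
by rewrite !ev_mulmx -[in RHS]invmx_sym mxE.
Qed.

Lemma sum_mxtrace_ev_dual_swap (f g : V -> 'M[R]_n) (M : 'M[R]_n) :
    linear f -> linear g ->
  \sum_i \tr (M *m f (e i) *m g (dual i)) = \sum_i \tr (M *m f (dual i) *m g (e i)).
Proof.
move=> f_lin g_lin.
apply: (sum_ev_dual_swap (phi := fun x y => \tr (M *m f x *m g y))) => [x a y z | y a x z] /=.
  by rewrite g_lin mulmxDr -scalemxAr mxtraceD mxtraceZ.
by rewrite f_lin mulmxDr mulmxDl -scalemxAr -scalemxAl mxtraceD mxtraceZ.
Qed.

Section LeviCivita.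
Variable br : V -> V -> V.
Hypotheses (br_linl : forall a u v w, br (a *: u + v) w = a *: br u w + br v w)
           (br_anti : forall u v, br u v = - br v u).

Lemma br_linr x : linear (br x).
Proof. by move=> a y z; rewrite br_anti br_linl opprD -scalerN -!br_anti. Qed.

Lemma ad_mul x y : y *m ad br x = br x y.
Proof. exact: mul_rV_lin1_linear (br_linr x) y. Qed.

Lemma ad_is_linear : linear (ad br).
Proof. by move=> a x y; apply/matrixP => i j; rewrite !mxE br_linl !mxE. Qed.

Lemma ip_ad_swap u v x y :
  ip B (u *m ad br x) (v *m ad br y) = ip B (x *m ad br u) (y *m ad br v).
Proof. by rewrite !ad_mul br_anti [br y v]br_anti ipNl ipNr opprK. Qed.

Definition adstar (x : V) : 'M[R]_n := lin1_mx (fun w => x *m adjoint (ad br w)).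

Lemma adstar_mul w x : w *m adstar x = x *m adjoint (ad br w).
Proof.
apply: mul_rV_lin1_linear => a y z.
by rewrite ad_is_linear adjoint_is_linear mulmxDr -scalemxAr.
Qed.

Lemma adstar_skew x : adjoint (adstar x) = - adstar x.
Proof.
apply/eqP/mulmxP => w; apply: ip_nondegenerate => z.
rewrite -ip_adjointr mulmxN ipNr !adstar_mul ip_adjointl (ip_sym z) ip_adjointl.
by rewrite !ad_mul [br w z]br_anti ipNr opprK.
Qed.

Lemma LC_ad u v :
  LC B br u v = 2^-1 *: (v *m ad br u - v *m adjoint (ad br u) - u *m adjoint (ad br v)).
Proof.
rewrite /LC; congr (_ *: _); apply: (canLR (mulmxK B_unit)); apply/rowP => j.
rewrite mxE ip_ev -ad_mul [br (e j) u]br_anti [br (e j) v]br_anti -!ad_mul !ipNl.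
by rewrite !ip_adjointr !(ip_sym (e j)) !ip_ev !mulmxBl !mxE.
Qed.

Definition Lmul (u : V) : 'M[R]_n := 2^-1 *: (ad br u - adjoint (ad br u) - adstar u).
Definition Rmul (x : V) : 'M[R]_n := - (2^-1 *: (ad br x + adjoint (ad br x) + adstar x)).

Lemma LC_Lmul u v : LC B br u v = v *m Lmul u.
Proof. by rewrite LC_ad /Lmul -scalemxAr !mulmxBr adstar_mul. Qed.

Lemma LC_Rmul w x : LC B br w x = w *m Rmul x.
Proof.
rewrite LC_ad /Rmul mulmxN -scalemxAr -scalerN !mulmxDr.
rewrite ad_mul br_anti -ad_mul -adstar_mul.
by congr (_ *: _); rewrite !opprD addrAC.
Qed.

Lemma ad_sub_Lmul u : ad br u - Lmul u = - Rmul u.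
Proof.
rewrite /Lmul /Rmul opprK; apply/eqP; rewrite subr_eq -scalerDr.
rewrite addrACA subrr addr0 addrACA subrr addr0 -mulr2n -scaler_nat scalerA.
by rewrite mulVf ?scale1r ?pnatr_eq0.
Qed.

Hypothesis br_unimodular : unimodular br.

Lemma mxtrace_Rmul x : \tr (Rmul x) = 0.
Proof.
rewrite /Rmul linearN /= mxtraceZ !mxtraceD mxtrace_adjoint br_unimodular.
by rewrite (mxtrace_skew (adstar_skew x)) !addr0 mulr0 oppr0.
Qed.

Lemma ric_Rmul u v : ric B br u v = - \tr (Rmul u *m Rmul v).
Proof.
rewrite /ric (lin1_mx_mulmxr (M := ad br u *m Rmul v - Rmul v *m Lmul u + Rmul (LC B br u v))).
  rewrite linearD linearB /= mxtrace_Rmul addr0 (mxtrace_mulC (ad br u)) -linearB /=.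
  by rewrite -mulmxBr ad_sub_Lmul mulmxN linearN /= mxtrace_mulC.
move=> w; rewrite /curv LC_Rmul (LC_Lmul u) (LC_Rmul w v) (LC_Rmul w (LC _ _ u v)) -ad_mul.
by rewrite mulmxDr mulmxBr !mulmxA opprB addrA addrAC.
Qed.

Lemma mxtrace_adstar_mul x y :
  \tr (adstar x *m adstar y)
  = - \sum_i ip B (x *m adjoint (ad br (e i))) (y *m adjoint (ad br (dual i))).
Proof.
rewrite mxtrace_dual -sumrN; apply: eq_bigr => i _.
by rewrite mulmxA ip_adjointr adstar_skew mulmxN ipNr !adstar_mul.
Qed.

Lemma ric_ad u v : ric B br u v = - (2 * (\tr (ad br u *m ad br v)
  + \tr (ad br u *m adjoint (ad br v))) + \tr (adstar u *m adstar v)) / 4.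
Proof.
have sym_ad x : adjoint (ad br x + adjoint (ad br x)) = ad br x + adjoint (ad br x).
  by rewrite adjointD adjointK addrC.
rewrite ric_Rmul /Rmul mulmxN mulNmx opprK -scalemxAl -scalemxAr !mxtraceZ.
by rewrite mxtrace_mul_sym_add_skew ?sym_ad ?adstar_skew // mxtrace_mul_add_adjoint; lra.
Qed.

Section Derivation.
Variable D : 'M[R]_n.
Hypothesis D_der : is_derivation br D.

Lemma ad_derivation x : ad br (x *m D) = ad br x *m D - D *m ad br x.
Proof. by apply/eqP/mulmxP => w; rewrite ad_mul mulmxBr !mulmxA !ad_mul D_der addrK. Qed.

Lemma adjoint_ad_is_linear : linear (fun x => adjoint (ad br x)).
Proof. by move=> a x y; rewrite ad_is_linear adjoint_is_linear. Qed.

Let sumD_left := \sum_j \tr (D *m ad br (dual j) *m adjoint (ad br (e j))).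
Let sumD_middle := \sum_j \tr (ad br (dual j) *m D *m adjoint (ad br (e j))).

Lemma sum_killing_derivation : \sum_j \tr (ad br (dual j *m D) *m ad br (e j)) = 0.
Proof.
under eq_bigr do rewrite ad_derivation mulmxBl linearB /= -mulmxA mxtrace_mulC.
by rewrite sumrB (sum_mxtrace_ev_dual_swap _ ad_is_linear ad_is_linear) subrr.
Qed.

Lemma sum_ad_adjoint_derivation :
  \sum_j \tr (ad br (dual j *m D) *m adjoint (ad br (e j))) = sumD_left.
Proof.
under eq_bigr do rewrite -sum_ip_ev_dual.
under eq_bigr do under eq_bigr do rewrite ip_ad_swap -mulmxA.
rewrite exchange_big /=; under eq_bigr do rewrite sum_ip_dual_ev.
exact: sum_mxtrace_ev_dual_swap ad_is_linear adjoint_ad_is_linear.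
Qed.

Lemma sumD_middle_double : sumD_middle = 2 * sumD_left.
Proof.
have := sum_ad_adjoint_derivation.
under eq_bigr do rewrite ad_derivation mulmxBl linearB /=.
by rewrite sumrB -/sumD_left -/sumD_middle; lra.
Qed.

Lemma sum_adstar_derivation :
  \sum_j \tr (adstar (dual j *m D) *m adstar (e j)) = - sumD_middle.
Proof.
under eq_bigr do rewrite mxtrace_adstar_mul.
rewrite sumrN exchange_big /=; congr (- _); apply: eq_bigr => i _.
under eq_bigr do rewrite -mulmxA.
by rewrite sum_ip_dual_ev adjointK mxtrace_mulC mulmxA.
Qed.

Lemma sum_ric_derivation : \sum_j ric B br (dual j *m D) (e j) = 0.
Proof.
under eq_bigr do rewrite ric_ad.
rewrite -mulr_suml sumrN big_split /= -mulr_sumr big_split /=.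
rewrite sum_killing_derivation sum_ad_adjoint_derivation sum_adstar_derivation.
by rewrite sumD_middle_double; lra.
Qed.

End Derivation.

Lemma ric_ev u j : ric B br u (e j) = (Ric B br u *m B) 0 j.
Proof. by rewrite /Ric -mulmxA mulVmx // mulmx1 mxE. Qed.

Lemma einstein_mxtrace_derivation D l : is_derivation br D ->
  (forall u, Ric B br u = l *: u) -> l * \tr D = 0.
Proof.
move=> D_der Ric_l; rewrite -(sum_ric_derivation D_der).
under eq_bigr do rewrite ric_ev Ric_l -scalemxAl mxE.
rewrite -mulr_sumr; congr (_ * _).
have -> : \tr D = \tr (invmx B *m (D *m B)).
  by rewrite mxtrace_mulC -mulmxA mulmxV ?mulmx1.
by apply: eq_bigr => i _; rewrite /dual -!mulmxA ev_mulmx.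
Qed.

End LeviCivita.
End PseudoEuclidean.

Unset Implicit Arguments.

Theorem proposition3p2 (R : realType) (n : nat)
    (br : 'rV[R]_n -> 'rV[R]_n -> 'rV[R]_n) (B : 'M[R]_n) :
  is_lie_bracket br -> is_pseudo_metric B -> unimodular br ->
  (exists D : 'M[R]_n, is_derivation br D /\ \tr D != 0) ->
  (einstein B br <-> ricci_flat B br).
Proof.
move=> [br_linl br_anti _] [B_sym B_unit] br_unimodular [D [D_der trD_neq0]].
split=> [[l Ric_l] u | Ric0]; last by exists 0 => u; rewrite Ric0 scale0r.
have /eqP := einstein_mxtrace_derivation B_sym B_unit br_linl br_anti br_unimodular
  D_der Ric_l.
by rewrite mulf_eq0 (negbTE trD_neq0) orbF => /eqP l0; rewrite Ric_l l0 scale0r.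
Qed.
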